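(* There is an absolute constant $C>0$ such that the following holds. Let $m, k \geq 1$ be integers and $\epsilon\in(0,1)$. Let $A, L$ be finite subsets of a group $G$ with $A$ nonempty, let $\mu$ be a measure on $G$, and denote $f = \mu_A*1_L \cdot (1 - \mu_A*1_L)$. If $\mathbf{a}=(a_1,\ldots,a_k) \in A^k$ is sampled uniformly at random and $k \geq Cm/\epsilon^2$, then \[ \mathbb{E} \| \mu_{\mathbf{a}}*1_L - \mu_A*1_L \|_{L^{2m}(\mu)}^{2m} \leq \epsilon^{2m} \|f\|_{L^m(\mu)}^m + \epsilon^{4m-2} \|f\|_{L^1(\mu)}. \]
   Context: $G$ is an arbitrary (possibly non-abelian) group, viewed as discrete. Convolution: $f*g(x)=\sum_y f(y)g(y^{-1}x)$. $1_X$ is the indicator of $X$, $\mu_X=1_X/|X|$, and for a tuple $\mathbf a=(a_1,\ldots,a_k)$, $\mu_{\mathbf a}=\frac1k\sum_{j=1}^k 1_{\{a_j\}}$, so $\mu_{\mathbf a}*1_L(x)=\frac1k\sum_j 1_L(a_j^{-1}x)$. For a measure $\mu$ on $G$, $\|F\|_{L^p(\mu)}^p=\sum_x \mu(x)|F(x)|^p$. *)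

From HB Require Import structures.
From mathcomp Require Import all_boot all_order all_algebra.
Set Implicit Arguments. Unset Strict Implicit. Unset Printing Implicit Defensive.
Import Order.TTheory GRing.Theory Num.Theory.
Local Open Scope ring_scope.

Definition is_group (G : Type) (mul : G -> G -> G) (inv : G -> G) (one : G) : Prop :=
  [/\ forall x y z, mul x (mul y z) = mul (mul x y) z,
      forall x, mul one x = x,
      forall x, mul x one = x,
      forall x, mul (inv x) x = one &
      forall x, mul x (inv x) = one].

Definition prodset (G : eqType) (mul : G -> G -> G) (A L : seq G) : seq G :=
  undup [seq mul a l | a <- A, l <- L].

(* mu_A * 1_L (x) = sum_y mu_A(y) 1_L(y^-1 x) = (1/|A|) sum_{a in A} 1_L(a^-1 x),
   for A a duplicate-free list. *)
Definition convAL (R : realFieldType) (G : eqType) (mul : G -> G -> G) (inv : G -> G)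
  (A L : seq G) (x : G) : R :=
  (size A)%:R^-1 * \sum_(a <- A) ((mul (inv a) x \in L) : nat)%:R.

Definition convTL (R : realFieldType) (G : eqType) (mul : G -> G -> G) (inv : G -> G)
  (k : nat) (a : 'I_k -> G) (L : seq G) (x : G) : R :=
  k%:R^-1 * \sum_(j < k) ((mul (inv (a j)) x \in L) : nat)%:R.

(* ||F||_{L^p(mu)}^p = sum_x mu(x) |F(x)|^p, where the sum ranges over a finite
   list S containing the support of F (all functions below are supported on AL). *)
Definition Lpow (R : realFieldType) (G : eqType) (S : seq G) (mu : G -> R)
  (F : G -> R) (p : nat) : R :=
  \sum_(x <- S) mu x * `|F x| ^+ p.

From HB Require Import structures.
From mathcomp Require Import all_boot all_order all_algebra.
From mathcomp Require Import zify ring lra.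
Import Order.TTheory GRing.Theory Num.Theory.
Set Implicit Arguments. Unset Strict Implicit. Unset Printing Implicit Defensive.

(* Fix x.  Then (mu_a * 1_L)(x) is the empirical mean of k independent uniform
   samples of the indicator h(a) = 1_L(a^-1 x), a in A, whose mean is
   p = (mu_A * 1_L)(x) and whose variance is v = p (1 - p) = f(x).  For the
   centred walk S_k with steps bounded by 1, a second-order expansion gives
     E S_(k+1)^(2m+2) <= E S_k^(2m+2) + v (2m+2)^2 E (|S_k| + 1)^(2m),
   and summing over k (a discrete integration in y = k v) together with
   induction on m yields E S_k^(2m) <= sum_(r=1..m) (8m)^(2m) (k v)^r / r!.
   With B = 512 m <= k eps^2 the coefficient (8m)^(2m) / r! is at most
   B^(2m-r) / m, and (k v)^r B^(2m-r) <= B^m (k v)^m + B^(2m-1) k v for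
   1 <= r <= m; dividing by k^(2m) gives the claimed bound at x, and
   multiplying by mu(x) and summing over x gives the theorem. *)

Section NatBounds.
Local Open Scope nat_scope.

Lemma bin_le_exp2 n j : 'C(n, j) <= 2 ^ n.
Proof.
elim: n j => [|n IHn] [|j] //; first by rewrite bin0 expn_gt0.
by rewrite binS expnS mul2n -addnn leq_add.
Qed.

Lemma expn_le_ffactD m j : m ^ j <= (m + j) ^_ j.
Proof.
elim: j => [|j IHj]; first by rewrite ffactn0.
by rewrite addnS ffactSS expnS leq_mul // ltnW // ltnS leq_addr.
Qed.

Lemma expn_le_fact m j : j <= m -> m ^ j <= 4 ^ m * j`!.
Proof.
move=> le_jm; apply: leq_trans (expn_le_ffactD m j) _.
rewrite -bin_ffact leq_mul2r (leq_trans (bin_le_exp2 _ _)) ?orbT //.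
by rewrite (_ : 4 = 2 ^ 2) // -expnM leq_exp2l //; lia.
Qed.

Lemma moment_coef_nat_bound m j : j <= m ->
  m * (8 * m) ^ (2 * m) <= j`! * (512 * m) ^ (2 * m - j).
Proof.
move=> le_jm.
have -> : (8 * m) ^ (2 * m) = 64 ^ m * m ^ j * m ^ (2 * m - j).
  by rewrite expnMn expnM -mulnA -expnD subnKC //; lia.
rewrite expnMn !mulnA leq_mul2r; apply/orP; right.
have le_m : m <= 2 ^ m by apply: ltnW; apply: ltn_expl.
apply: leq_trans (leq_mul (leq_mul le_m (leqnn (64 ^ m))) (expn_le_fact le_jm)) _.
rewrite mulnA mulnC leq_mul2l -!expnMn leq_exp2l //; lia.
Qed.

End NatBounds.

Local Open Scope ring_scope.

Section RealInequalities.
Variable R : realFieldType.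
Implicit Types a b s v x y B : R.

Lemma bernoulli_le a n : 0 <= a -> (a + 1) ^+ n * (a - n%:R) <= a ^+ n.+1.
Proof.
move=> a_ge0; elim: n => [|n IHn]; first by rewrite mul1r subr0 expr1.
have a1n_ge0 : 0 <= (a + 1) ^+ n by rewrite exprn_ge0 // addr_ge0.
have -> : (a + 1) ^+ n.+1 * (a - n.+1%:R) =
          a * ((a + 1) ^+ n * (a - n%:R)) - (a + 1) ^+ n * n.+1%:R.
  by rewrite exprS -natr1; ring.
rewrite [a ^+ _]exprS lerBlDr (le_trans (ler_wpM2l a_ge0 IHn)) // lerDl.
by rewrite mulr_ge0.
Qed.

Lemma exprD1_le a n : 0 <= a -> (a + 1) ^+ n <= 2 * a ^+ n + (2 * n + 1)%:R ^+ n.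
Proof.
move=> a_ge0; have an_ge0 : 0 <= a ^+ n by rewrite exprn_ge0.
have [small|large] := ltP a (2 * n)%:R.
  apply: le_trans (_ : _ <= (2 * n + 1)%:R ^+ n) _; last by rewrite lerDr mulr_ge0.
  by rewrite lerXn2r ?nnegrE ?addr_ge0 // natrD lerD2r ltW.
case: n large an_ge0 => [|n] large an_ge0; first by rewrite !expr0; lra.
have a_gt0 : 0 < a by apply: lt_le_trans large; rewrite ltr0n; lia.
have a1n_ge0 : 0 <= (a + 1) ^+ n.+1 by rewrite exprn_ge0 // addr_ge0.
suff le2 : (a + 1) ^+ n.+1 <= 2 * a ^+ n.+1 by rewrite (le_trans le2) // lerDl exprn_ge0.
rewrite -(ler_pM2r a_gt0) -mulrA -exprSr.
apply: le_trans (_ : _ <= 2 * ((a + 1) ^+ n.+1 * (a - n.+1%:R))) _.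
  by rewrite mulrCA ler_wpM2l //; move: large; rewrite natrM; lra.
by rewrite ler_wpM2l ?bernoulli_le.
Qed.

Lemma normr_exprD_sub_linear s b q : `|b| <= 1 ->
  `|(s + b) ^+ q.+2 - s ^+ q.+2 - q.+2%:R * s ^+ q.+1 * b|
    <= b ^+ 2 * (q.+2%:R ^+ 2 * (`|s| + 1) ^+ q).
Proof.
move=> b_le1; set u := `|s| + 1.
have u_ge0 : 0 <= u by rewrite addr_ge0.
have b2_ge0 : 0 <= b ^+ 2 by rewrite sqr_ge0.
elim: q => [|q IHq].
  have -> : (s + b) ^+ 2 - s ^+ 2 - 2%:R * s ^+ 1 * b = b ^+ 2 by ring.
  by rewrite ger0_norm // expr0 mulr1 ler_peMr // -natrX ler1n.
have -> : (s + b) ^+ q.+3 - s ^+ q.+3 - q.+3%:R * s ^+ q.+2 * b =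
    (s + b) * ((s + b) ^+ q.+2 - s ^+ q.+2 - q.+2%:R * s ^+ q.+1 * b)
    + q.+2%:R * s ^+ q.+1 * b ^+ 2.
  by rewrite -!natr1 !exprS; ring.
have sb_le : `|s + b| <= u by rewrite (le_trans (ler_normD _ _)) // lerD2l.
have s_le : `|s ^+ q.+1| <= u ^+ q.+1 by rewrite normrX lerXn2r ?nnegrE ?lerDl.
have t1 : `|(s + b) * ((s + b) ^+ q.+2 - s ^+ q.+2 - q.+2%:R * s ^+ q.+1 * b)|
    <= u * (b ^+ 2 * (q.+2%:R ^+ 2 * u ^+ q)) by rewrite normrM ler_pM.
have t2 : `|q.+2%:R * s ^+ q.+1 * b ^+ 2| <= q.+2%:R * u ^+ q.+1 * b ^+ 2.
  by rewrite normrM (ger0_norm b2_ge0) normrM normr_nat ler_wpM2r // ler_wpM2l.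
apply: le_trans (ler_normD _ _) _; apply: le_trans (lerD t1 t2) _.
have le_sq : q.+2%:R ^+ 2 + q.+2%:R <= q.+3%:R ^+ 2 :> R.
  by rewrite -!natrX -natrD ler_nat; lia.
have -> : u * (b ^+ 2 * (q.+2%:R ^+ 2 * u ^+ q)) + q.+2%:R * u ^+ q.+1 * b ^+ 2
    = b ^+ 2 * u ^+ q.+1 * (q.+2%:R ^+ 2 + q.+2%:R) by rewrite [u ^+ q.+1]exprS; ring.
rewrite [X in _ <= X](_ : _ = b ^+ 2 * u ^+ q.+1 * q.+3%:R ^+ 2); last by ring.
by rewrite ler_wpM2l // mulr_ge0 // exprn_ge0.
Qed.

Lemma exprD_ge_linear y v r : 0 <= y -> 0 <= v ->
  y ^+ r.+1 + r.+1%:R * v * y ^+ r <= (y + v) ^+ r.+1.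
Proof.
move=> y_ge0 v_ge0; elim: r => [|r IHr]; first by rewrite !expr1 expr0 mulr1 mul1r.
have yv_ge0 : 0 <= y + v by rewrite addr_ge0.
rewrite [(y + v) ^+ r.+2]exprS; apply: le_trans _ (ler_wpM2l yv_ge0 IHr).
rewrite -subr_ge0 (_ : _ - _ = r.+1%:R * v * v * y ^+ r).
  by rewrite !mulr_ge0 // exprn_ge0.
by rewrite -[r.+2%:R]natr1 !exprS; ring.
Qed.

Lemma expr_interpolate_le x B j m : 0 <= x -> 0 <= B -> (0 < j)%N -> (j <= m)%N ->
  x ^+ j * B ^+ (2 * m - j) <= B ^+ m * x ^+ m + B ^+ (2 * m - 1) * x.
Proof.
move=> x_ge0 B_ge0 j_gt0 le_jm.
have Bxm_ge0 : 0 <= B ^+ m * x ^+ m by rewrite mulr_ge0 ?exprn_ge0.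
have Bx_ge0 : 0 <= B ^+ (2 * m - 1) * x by rewrite mulr_ge0 ?exprn_ge0.
have [le_xB|le_Bx] := leP x B.
  apply: le_trans (_ : _ <= B ^+ (2 * m - 1) * x) _; last by rewrite lerDr.
  rewrite (_ : (2 * m - 1 = (j - 1) + (2 * m - j))%N); last by lia.
  have -> : x ^+ j = x ^+ (j - 1) * x by rewrite -exprSr; congr (_ ^+ _); lia.
  rewrite exprD mulrAC ler_wpM2r // ler_wpM2r ?exprn_ge0 //.
  by rewrite lerXn2r.
apply: le_trans (_ : _ <= B ^+ m * x ^+ m) _; last by rewrite lerDl.
rewrite (_ : (2 * m - j = m + (m - j))%N); last by lia.
rewrite exprD mulrCA ler_wpM2l ?exprn_ge0 //.
rewrite -(subnKC le_jm) addKn exprD ler_wpM2l ?exprn_ge0 //.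
by rewrite lerXn2r ?nnegrE // ltW.
Qed.
End RealInequalities.

Lemma discrete_integral_le (R : realFieldType) (F c : nat -> R) v N :
  0 <= v -> F 0%N = 0 -> (forall r, 0 <= c r) ->
  (forall k, F k.+1 <= F k + v * \sum_(r < N) c r * (k%:R * v) ^+ r) ->
  forall K, F K <= \sum_(r < N) c r / r.+1%:R * (K%:R * v) ^+ r.+1.
Proof.
move=> v_ge0 F0 c_ge0 F_step; elim=> [|K IHK].
  by rewrite F0 big1 // => r _; rewrite mul0r expr0n mulr0.
apply: le_trans (F_step K) _; apply: le_trans (lerD IHK (lexx _)) _.
rewrite -natr1 mulrDl mul1r mulr_sumr -big_split; apply: ler_sum => r _ /=.
have cr_ge0 : 0 <= c r / r.+1%:R by rewrite divr_ge0.
apply: le_trans _ (ler_wpM2l cr_ge0 (exprD_ge_linear r (mulr_ge0 (ler0n _ K) v_ge0) v_ge0)).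
rewrite mulrDr lerD2l le_eqVlt; apply/predU1P; left.
by field; rewrite addrC natr1 pnatr_eq0.
Qed.

Definition moment_coef (R : realFieldType) m r : R :=
  (8 * m)%:R ^+ (2 * m) / r.+1`!%:R.

Lemma moment_coef_ge0 (R : realFieldType) m r : 0 <= moment_coef R m r.
Proof. by rewrite divr_ge0 ?exprn_ge0. Qed.

Lemma moment_coef_step0 (R : realFieldType) M :
  (2 * M).+2%:R ^+ 2 * (2 * (2 * M) + 1)%:R ^+ (2 * M) / 1%:R <= moment_coef R M.+1 0.
Proof.
rewrite /moment_coef !divr1 [(2 * M.+1)%N]mulnS exprD.
by rewrite ler_pM ?exprn_ge0 // lerXn2r ?nnegrE // ler_nat; lia.
Qed.

Lemma moment_coef_stepS (R : realFieldType) M r :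
  (2 * M).+2%:R ^+ 2 * (2 * moment_coef R M r) / r.+2%:R <= moment_coef R M.+1 r.+1.
Proof.
have -> : (2 * M).+2%:R ^+ 2 * (2 * moment_coef R M r) / r.+2%:R
    = (2 * M).+2%:R ^+ 2 * 2 * (8 * M)%:R ^+ (2 * M) / r.+2`!%:R.
  rewrite /moment_coef [r.+2`!]factS [(r.+2 * _)%:R]natrM.
  by field; rewrite pnatr_eq0 -lt0n fact_gt0 -natrD pnatr_eq0.
rewrite /moment_coef ler_wpM2r ?invr_ge0 // [(2 * M.+1)%N]mulnS exprD.
rewrite ler_pM ?mulr_ge0 ?exprn_ge0 //.
  by rewrite -!natrX -natrM ler_nat; lia.
by rewrite lerXn2r ?nnegrE // ler_nat; lia.
Qed.

Lemma sum_moment_coef_le (R : realFieldType) m (x : R) : 0 <= x ->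
  \sum_(r < m) moment_coef R m r * x ^+ r.+1
    <= (512 * m)%:R ^+ m * x ^+ m + (512 * m)%:R ^+ (2 * m - 1) * x.
Proof.
move=> x_ge0; case: m => [|m]; first by rewrite big_ord0 addr_ge0 ?mulr_ge0 ?exprn_ge0.
set B : R := (512 * m.+1)%:R; set rhs := _ + _.
have m_gt0 : 0 < m.+1%:R :> R by rewrite ltr0n.
have -> : rhs = \sum_(r < m.+1) rhs / m.+1%:R.
  by rewrite sumr_const card_ord -[_ *+ m.+1]mulr_natr divfK // lt0r_neq0.
apply: ler_sum => r _; rewrite ler_pdivlMr //.
have coef_le : moment_coef R m.+1 r * m.+1%:R <= B ^+ (2 * m.+1 - r.+1).
  rewrite /moment_coef mulrAC ler_pdivrMr ?ltr0n ?fact_gt0 // mulrC.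
  by rewrite /B -!natrX -!natrM ler_nat [(_ ^ _ * _)%N]mulnC moment_coef_nat_bound.
apply: le_trans _ (expr_interpolate_le x_ge0 (ler0n _ _) (ltn0Sn r) (ltn_ord r)).
by rewrite mulrAC mulrC ler_wpM2l ?exprn_ge0.
Qed.

Section RandomWalk.
Variables (R : realFieldType) (n : nat) (X : 'I_n -> R).
Hypothesis n_gt0 : (0 < n)%N.

Definition walk k (t : {ffun 'I_k -> 'I_n}) : R := \sum_(j < k) X (t j).

Definition expect k (phi : R -> R) : R :=
  n%:R ^- k * \sum_(t : {ffun 'I_k -> 'I_n}) phi (walk t).

Lemma expect0 phi : expect 0 phi = phi 0.
Proof.
rewrite /expect (eq_bigr (fun=> phi 0)) => [|t _]; last by rewrite /walk big_ord0.
by rewrite sumr_const card_ffun !card_ord expr0 invr1 mul1r.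
Qed.

Definition ffun_cons k (p : 'I_n * {ffun 'I_k -> 'I_n}) : {ffun 'I_k.+1 -> 'I_n} :=
  [ffun j => if unlift ord0 j is Some j' then p.2 j' else p.1].

Lemma ffun_cons_bij k : bijective (@ffun_cons k).
Proof.
exists (fun t : {ffun 'I_k.+1 -> 'I_n} => (t ord0, [ffun j : 'I_k => t (lift ord0 j)])).
  case=> a t; rewrite /ffun_cons ffunE unlift_none; congr pair.
  by apply/ffunP => j; rewrite !ffunE liftK.
by move=> t; apply/ffunP => j; rewrite ffunE; case: unliftP => [j' ->|->]; rewrite ?ffunE.
Qed.

Lemma walk_cons k a (t : {ffun 'I_k -> 'I_n}) : walk (ffun_cons (a, t)) = X a + walk t.
Proof.
rewrite /walk big_ord_recl ffunE unlift_none; congr (_ + _).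
by apply: eq_bigr => j _; rewrite ffunE liftK.
Qed.

Lemma expectS k phi :
  expect k.+1 phi = expect k (fun s => n%:R^-1 * \sum_(a < n) phi (X a + s)).
Proof.
rewrite /expect (reindex _ (onW_bij _ (@ffun_cons_bij k))) /=.
rewrite -mulr_sumr exchange_big pair_big /= exprS invfM [RHS]mulrA [_ * n%:R^-1]mulrC.
by congr (_ * _); apply: eq_bigr => -[a t] _; rewrite walk_cons.
Qed.

Lemma ler_expect k phi psi : (forall s, phi s <= psi s) -> expect k phi <= expect k psi.
Proof. by move=> le_phi; rewrite ler_wpM2l ?invr_ge0 ?exprn_ge0 ?ler_sum. Qed.

Lemma expectD k phi psi :
  expect k (fun s => phi s + psi s) = expect k phi + expect k psi.
Proof. by rewrite /expect big_split mulrDr. Qed.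

Lemma expectZ k c phi : expect k (fun s => c * phi s) = c * expect k phi.
Proof. by rewrite /expect -mulr_sumr mulrCA. Qed.

Lemma expect_cst k c : expect k (fun=> c) = c.
Proof.
rewrite /expect sumr_const card_ffun !card_ord -[c *+ _]mulr_natl natrX.
by rewrite mulrA mulVf ?mul1r // expf_neq0 // pnatr_eq0 -lt0n.
Qed.

Variable v : R.
Hypothesis X_sum : \sum_(a < n) X a = 0.
Hypothesis X_bounded : forall a, `|X a| <= 1.
Hypothesis X_sum_sqr : \sum_(a < n) X a ^+ 2 = n%:R * v.

Lemma variance_ge0 : 0 <= v.
Proof.
have n_pos : 0 < n%:R :> R by rewrite ltr0n.
by rewrite -(pmulr_rge0 _ n_pos) -X_sum_sqr sumr_ge0 // => a _; rewrite sqr_ge0.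
Qed.

Lemma mean_exprD_le q s :
  n%:R^-1 * \sum_(a < n) (X a + s) ^+ q.+2
    <= s ^+ q.+2 + v * (q.+2%:R ^+ 2 * (`|s| + 1) ^+ q).
Proof.
rewrite ler_pdivrMl ?ltr0n //.
apply: le_trans (_ : _ <= \sum_(a < n) (s ^+ q.+2 + q.+2%:R * s ^+ q.+1 * X a
                                    + X a ^+ 2 * (q.+2%:R ^+ 2 * (`|s| + 1) ^+ q))) _.
  apply: ler_sum => a _; rewrite addrC.
  have := le_trans (ler_norm _) (normr_exprD_sub_linear s q (X_bounded a)); lra.
rewrite !big_split /= -[\sum_(a < n) _ * X a]mulr_sumr.
rewrite -[\sum_(a < n) X a ^+ 2 * _]mulr_suml X_sum X_sum_sqr sumr_const card_ord.
by rewrite mulr0 addr0 -[_ *+ n]mulr_natl mulrDr [n%:R * (v * _)]mulrA.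
Qed.

Lemma expect_moment_step k q :
  expect k.+1 (fun s => s ^+ q.+2) <=
  expect k (fun s => s ^+ q.+2) + v * (q.+2%:R ^+ 2 * expect k (fun s => (`|s| + 1) ^+ q)).
Proof. by rewrite expectS -!expectZ -expectD; apply: ler_expect => s; apply: mean_exprD_le. Qed.

Lemma expect_moment_le_integral q N (c : nat -> R) : (forall r, 0 <= c r) ->
  (forall k, expect k (fun s => (`|s| + 1) ^+ q) <= \sum_(r < N) c r * (k%:R * v) ^+ r) ->
  forall K, expect K (fun s => s ^+ q.+2)
    <= \sum_(r < N) q.+2%:R ^+ 2 * c r / r.+1%:R * (K%:R * v) ^+ r.+1.
Proof.
move=> c_ge0 le_c.
apply: (discrete_integral_le (c := fun r => q.+2%:R ^+ 2 * c r) variance_ge0) => [|r|k].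
- by rewrite expect0 expr0n.
- by rewrite mulr_ge0 ?exprn_ge0.
apply: le_trans (expect_moment_step k q) _; rewrite lerD2l ler_wpM2l ?variance_ge0 //.
under eq_bigr do rewrite -mulrA.
by rewrite -mulr_sumr ler_wpM2l ?exprn_ge0.
Qed.

Lemma even_moment_le m k : expect k (fun s => s ^+ (2 * m.+1))
  <= \sum_(r < m.+1) moment_coef R m.+1 r * (k%:R * v) ^+ r.+1.
Proof.
have y_ge0 j : 0 <= j%:R * v by rewrite mulr_ge0 ?variance_ge0.
elim: m k => [|m IHm] K.
  apply: le_trans (expect_moment_le_integral (N := 1) (c := fun=> 1) _ _ K) _ => // [k|].
    by rewrite big_ord1 expr0 mulr1 (expect_cst k 1).
  by rewrite !big_ord1 ler_wpM2r ?exprn_ge0 ?y_ge0 // /moment_coef mulr1 !divr1 -!natrX ler_nat.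
set q := (2 * m.+1)%N; rewrite (_ : 2 * m.+2 = q.+2)%N; last by rewrite /q; lia.
pose c r := if r is r'.+1 then 2 * moment_coef R m.+1 r' else (2 * q + 1)%:R ^+ q.
have c_ge0 r : 0 <= c r.
  by case: r => [|r]; [apply: exprn_ge0 | apply: mulr_ge0; rewrite ?moment_coef_ge0].
apply: le_trans (expect_moment_le_integral (N := m.+2) c_ge0 _ K) _ => [k|].
  apply: le_trans (_ : _ <= expect k (fun s => 2 * s ^+ q + (2 * q + 1)%:R ^+ q)) _.
    have even_q : ~~ odd q by rewrite /q mul2n odd_double.
    apply: ler_expect => s; rewrite -(ger0_norm (exprn_even_ge0 s even_q)) normrX.
    exact: exprD1_le.
  rewrite expectD expectZ expect_cst big_ord_recl /= expr0 mulr1 addrC lerD2l.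
  under eq_bigr do rewrite -mulrA.
  by rewrite -mulr_sumr ler_wpM2l //; apply: IHm.
apply: ler_sum => -[[|r] lt_r] _; rewrite ler_wpM2r ?exprn_ge0 ?y_ge0 //.
  exact: moment_coef_step0.
exact: moment_coef_stepS.
Qed.

Lemma expect_scaled_moment_le m k eps : (0 < m)%N -> 0 < eps ->
  512%:R * m%:R / eps ^+ 2 <= k%:R ->
  expect k (fun s => (s / k%:R) ^+ (2 * m))
    <= eps ^+ (2 * m) * v ^+ m + eps ^+ (4 * m - 2) * v.
Proof.
case: m => [|m] // _ eps_gt0 le_k; set M := m.+1.
have eps2_gt0 : 0 < eps ^+ 2 by rewrite exprn_gt0.
have k_gt0 : 0 < k%:R :> R.
  by apply: lt_le_trans le_k; rewrite divr_gt0 ?mulr_gt0 ?ltr0n.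
have B_le : (512 * M)%:R <= k%:R * eps ^+ 2 by rewrite natrM -ler_pdivrMr.
have B_ge0 : 0 <= (512 * M)%:R :> R by [].
have x_ge0 : 0 <= k%:R * v by rewrite mulr_ge0 ?variance_ge0 // ltW.
apply: le_trans (_ : _ <= k%:R ^- (2 * M) * ((k%:R * eps ^+ 2) ^+ M * (k%:R * v) ^+ M
                  + (k%:R * eps ^+ 2) ^+ (2 * M - 1) * (k%:R * v))) _.
  apply: le_trans (_ : _ <= expect k (fun s => k%:R ^- (2 * M) * s ^+ (2 * M))) _.
    by apply: ler_expect => s; rewrite exprMn exprVn mulrC.
  have kN_ge0 : 0 <= k%:R ^- (2 * M) :> R by rewrite invr_ge0 exprn_ge0 // ltW.
  rewrite expectZ ler_wpM2l //.
  apply: le_trans (even_moment_le m k) _; apply: le_trans (sum_moment_coef_le m.+1 x_ge0) _.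
  have keps_ge0 := le_trans B_ge0 B_le.
  by apply: lerD; rewrite ler_wpM2r ?exprn_ge0 // lerXn2r ?nnegrE.
have k_neq0 : k%:R != 0 :> R by rewrite lt0r_neq0.
rewrite mulrDr le_eqVlt; apply/predU1P; left; congr (_ + _).
  by rewrite !exprM -exprVn -!exprMn; congr (_ ^+ _); field.
rewrite (_ : (4 * M - 2 = 2 * (2 * M - 1))%N); last by lia.
rewrite {1}(_ : (2 * M = (2 * M - 1).+1)%N); last by lia.
rewrite exprM [k%:R ^+ _.+1]exprSr [(k%:R * _) ^+ _]exprMn.
by field; rewrite k_neq0 expf_neq0.
Qed.

End RandomWalk.

Lemma indicator_sample_moment_le (R : realFieldType) n (h : 'I_n -> R) p m k (eps : R) :
  (0 < n)%N -> (forall a, h a = 0 \/ h a = 1) -> p = n%:R^-1 * \sum_(a < n) h a ->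
  (0 < m)%N -> 0 < eps -> 512%:R * m%:R / eps ^+ 2 <= k%:R ->
  n%:R ^- k * \sum_(t : {ffun 'I_k -> 'I_n}) `|k%:R^-1 * \sum_(j < k) h (t j) - p| ^+ (2 * m)
    <= eps ^+ (2 * m) * `|p * (1 - p)| ^+ m + eps ^+ (4 * m - 2) * `|p * (1 - p)| ^+ 1.
Proof.
move=> n_gt0 h01 def_p m_gt0 eps_gt0 le_k.
have n_pos : 0 < n%:R :> R by rewrite ltr0n.
have k_gt0 : 0 < k%:R :> R.
  by apply: lt_le_trans le_k; rewrite divr_gt0 ?mulr_gt0 ?ltr0n ?exprn_gt0.
have sum_h : \sum_(a < n) h a = n%:R * p by rewrite def_p mulrA mulfV ?mul1r ?lt0r_neq0.
have h_ge0 a : 0 <= h a by case: (h01 a) => ->.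
have h_le1 a : h a <= 1 by case: (h01 a) => ->.
have p_ge0 : 0 <= p by rewrite def_p mulr_ge0 ?invr_ge0 ?sumr_ge0.
have p_le1 : p <= 1.
  rewrite def_p ler_pdivrMl // mulr1; apply: le_trans (ler_sum _ (fun a _ => h_le1 a)) _.
  by rewrite sumr_const card_ord.
pose X a := h a - p.
have X_sum : \sum_(a < n) X a = 0.
  by rewrite sumrB sum_h sumr_const card_ord -[p *+ n]mulr_natl subrr.
have X_bounded a : `|X a| <= 1.
  by rewrite /X; case: (h01 a) => ->; rewrite ?sub0r ?normrN ger0_norm; lra.
have X_sum_sqr : \sum_(a < n) X a ^+ 2 = n%:R * (p * (1 - p)).
  have sqr_X a : X a ^+ 2 = h a * (1 - 2 * p) + p ^+ 2.
    by rewrite /X; case: (h01 a) => ->; ring.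
  rewrite (eq_bigr _ (fun a _ => sqr_X a)) big_split /= -mulr_suml sum_h sumr_const.
  by rewrite card_ord -[_ *+ n]mulr_natl; ring.
have v_ge0 := variance_ge0 n_gt0 X_sum_sqr.
rewrite ger0_norm // expr1.
apply: le_trans (expect_scaled_moment_le n_gt0 X_sum X_bounded X_sum_sqr m_gt0 eps_gt0 le_k).
rewrite /expect le_eqVlt; apply/predU1P; left; congr (_ * _).
apply: eq_bigr => t _; rewrite -normrX ger0_norm ?exprn_even_ge0 ?mul2n ?odd_double //.
rewrite /walk /X sumrB sumr_const card_ord -[p *+ k]mulr_natl; congr (_ ^+ _).
by field; rewrite lt0r_neq0.
Qed.

Theorem lemma14 :
  exists C : nat, (0 < C)%N /\
  forall (R : realFieldType) (G : eqType) (mul : G -> G -> G) (inv : G -> G) (one : G),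
    is_group mul inv one ->
  forall (m k : nat) (eps : R) (A L : seq G) (mu : G -> R),
    (1 <= m)%N -> (1 <= k)%N -> 0 < eps -> eps < 1 ->
    uniq A -> uniq L -> A != [::] ->
    (forall x, 0 <= mu x) ->
    C%:R * m%:R / eps ^+ 2 <= k%:R ->
    let g := convAL R mul inv A L in
    let f := fun x => g x * (1 - g x) in
    let S := prodset mul A L in
    (size A)%:R ^- k *
      \sum_(t : {ffun 'I_k -> 'I_(size A)})
         Lpow S mu (fun x => convTL R mul inv (fun j => nth one A (t j)) L x - g x) (2 * m)
    <= eps ^+ (2 * m) * Lpow S mu f m + eps ^+ (4 * m - 2) * Lpow S mu f 1.
Proof.
(* The bound holds pointwise in x. *)
exists 512%N; split => //.
move=> R G mul inv one _ m k eps A L mu m_gt0 _ eps_gt0 _ _ _ A_neq0 mu_ge0 le_k.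
cbv zeta; rewrite /Lpow; set g := convAL R mul inv A L.
rewrite exchange_big mulr_sumr !mulr_sumr -big_split /=; apply: ler_sum => x _.
pose h a := ((mul (inv (nth one A a)) x \in L) : nat)%:R : R.
have def_g : g x = (size A)%:R^-1 * \sum_(a < size A) h a.
  by rewrite /g /convAL (big_nth one) big_mkord.
have h01 a : h a = 0 \/ h a = 1 by rewrite /h; case: (_ \in L); [right | left].
have A_gt0 : (0 < size A)%N by rewrite lt0n size_eq0.
rewrite -mulr_sumr mulrCA (mulrCA _ (mu x)) (mulrCA _ (mu x)) -mulrDr ler_wpM2l //.
exact: indicator_sample_moment_le A_gt0 h01 def_g m_gt0 eps_gt0 le_k.
Qed.
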